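(* There is a function $C_4(t,\epsilon)$ such that the following holds for every positive integer $t$ and every $\epsilon\in(0,1)$: let $G$ be a bipartite graph with $\delta(G)\geq C_4(t,\epsilon)$ which is induced $S_{t,t}$-free. Then for every path $x_1x_2x_3x_4x_5x_6$ of length $5$ in $G$ we have $|S_{N(x_1)}^{N(x_6)}(\epsilon)|\leq C_4(t,\epsilon)$.
   Context: For positive integers $a,b$, the biclaw $S_{a,b}$ is the graph with vertex set $\{x,x_1,\dots,x_a,y,y_1,\dots,y_b\}$ and edges $xy$, $xy_1,\dots,xy_b$, $yx_1,\dots,yx_a$. Induced $S_{t,t}$-free means no induced subgraph isomorphic to $S_{t,t}$. $N(v)$ is the neighbourhood of $v$, $\delta(G)$ the minimum degree. For vertex sets $X,Y$ and $\epsilon\in(0,1)$, $S_X^Y(\epsilon)=\{x\in X : |N(x)\cap Y|\leq (1-\epsilon)|Y|\}$. *)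

From HB Require Import structures.
From mathcomp Require Import all_boot all_order all_algebra.
From mathcomp Require Import reals.
Set Implicit Arguments. Unset Strict Implicit. Unset Printing Implicit Defensive.
Import Order.TTheory GRing.Theory Num.Theory.

(* Simple graphs: a symmetric irreflexive relation [adj] on a finite type. *)

Definition nbhd (T : finType) (adj : rel T) (v : T) : {set T} := [set u | adj v u].

Definition bipartite (T : finType) (adj : rel T) : Prop :=
  exists c : T -> bool, forall u v, adj u v -> c u != c v.

(* Vertices of the biclaw S_{a,b}:
   inl true = x, inl false = y, inr (inl i) = x_i, inr (inr j) = y_j. *)
Definition biclaw_vert (a b : nat) : finType := (bool + ('I_a + 'I_b))%type.

Definition biclaw_adj (a b : nat) : rel (biclaw_vert a b) :=
  fun u v =>
    match u, v with
    | inl b1, inl b2 => b1 != b2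
    | inl true, inr (inr _) => true
    | inr (inr _), inl true => true
    | inl false, inr (inl _) => true
    | inr (inl _), inl false => true
    | _, _ => false
    end.

Definition has_induced_biclaw (T : finType) (adj : rel T) (a b : nat) : Prop :=
  exists f : biclaw_vert a b -> T,
    injective f /\ forall u v, adj (f u) (f v) = biclaw_adj u v.

Definition Sset (R : realType) (T : finType) (adj : rel T) (X Y : {set T}) (eps : R)
  : {set T} :=
  [set x in X | (#|nbhd adj x :&: Y|%:R <= (1 - eps) * #|Y|%:R)%R].

(* Say v is far from Y at scale k if v misses at least |Y|/k vertices of Y.
   For an edge xy and a large W inside N(y), fewer than t(2k)^t neighbours of x
   are far from W: otherwise a greedy averaging argument picks t of them and t
   vertices of W with no edges in between, and with x and y these span an
   induced S_{t,t} (bipartiteness makes each side independent).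
   The bound is then pushed two steps along the path q p q'. If few neighbours of
   q' are far from Y, then every x in N(p) seeing most of N(q') has a neighbour g
   close to Y, so few neighbours of x are far from Y; double counting the edges
   between N(p) and those far neighbours of q that see most of N(p) then shows
   that few neighbours of q are far from Y.  Starting at the edge x5x6 with
   Y = N(x6), two transfers bound the far neighbours of x1, and these contain
   S_{N(x1)}^{N(x6)}(eps) once k > 1/eps. *)

From HB Require Import structures.
From mathcomp Require Import all_boot all_order all_algebra.
From mathcomp Require Import reals.
From mathcomp Require Import zify lra.
Import Order.TTheory GRing.Theory Num.Theory.
Set Implicit Arguments. Unset Strict Implicit. Unset Printing Implicit Defensive.

Section DoubleCounting.
Variable T : finType.

Lemma card_sep_sum (A : {set T}) (P : pred T) : #|[set a in A | P a]| = \sum_(a in A) P a.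
Proof.
rewrite -sum1_card (eq_bigl (fun a => (a \in A) && P a)) => [|a]; last by rewrite inE.
by rewrite big_mkcondr; apply: eq_bigr => a _; case: (P a).
Qed.

Lemma double_count (A B : {set T}) (r : rel T) :
  \sum_(a in A) #|[set b in B | r a b]| = \sum_(b in B) #|[set a in A | r a b]|.
Proof.
under eq_bigr do rewrite card_sep_sum.
under [RHS]eq_bigr do rewrite card_sep_sum.
exact: exchange_big.
Qed.

End DoubleCounting.

Section Far.
Variables (T : finType) (adj : rel T).
Local Notation N := (nbhd adj).

Definition far k (X Y : {set T}) : {set T} := [set v in X | #|Y| <= #|Y :\: N v| * k].

Definition anticomplete (A B : {set T}) : Prop :=
  forall a b, a \in A -> b \in B -> ~~ adj a b.

Lemma far_sub k X Y : far k X Y \subset X.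
Proof. by apply/subsetP => v /setIdP[]. Qed.

Lemma setD_nbhd (W : {set T}) a : W :\: N a = [set w in W | ~~ adj a w].
Proof. by apply/setP => w; rewrite !inE andbC. Qed.

Lemma far_shrink k a (Y W : {set T}) : W \subset Y -> #|Y| <= #|Y :\: N a| * k ->
  2 * k * #|Y :\: W| <= #|Y| -> #|W| <= #|W :\: N a| * (2 * k).
Proof.
move=> sWY hYa hYW.
have hsplit : #|Y :\: N a| <= #|W :\: N a| + #|Y :\: W|.
  apply: leq_trans (leq_card_setU _ _); apply: subset_leq_card; apply/subsetP => w.
  by rewrite !inE; case: (w \in W); case: (w \in Y); case: (adj a w).
have := subset_leq_card sWY; nia.
Qed.

Lemma averaging_nonnbr k (A W : {set T}) : 0 < #|W| ->
  (forall a, a \in A -> #|W| <= #|W :\: N a| * k) ->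
  exists2 w, w \in W & #|A| <= #|[set a in A | ~~ adj a w]| * k.
Proof.
move=> W_gt0 hA; have /card_gt0P[w0 w0W] := W_gt0.
pose miss w := #|[set a in A | ~~ adj a w]|.
have [w wW wmax] := @arg_maxnP _ w0 (mem W) miss w0W.
exists w => //.
have hsum : #|A| * #|W| <= (\sum_(v in W) miss v) * k.
  rewrite -(double_count _ _ (fun a v => ~~ adj a v)) big_distrl -sum_nat_const /=.
  by apply: leq_sum => a aA; rewrite -setD_nbhd; apply: hA.
have hmax : \sum_(v in W) miss v <= #|W| * miss w.
  by rewrite -sum_nat_const; apply: leq_sum => v vW; apply: wmax.
rewrite -(leq_pmul2r W_gt0); apply: leq_trans hsum _.
by rewrite mulnAC leq_mul2r [miss w * _]mulnC hmax orbT.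
Qed.

Lemma anticomplete_grow k n (A W : {set T}) : 0 < k ->
  (forall a, a \in A -> #|W| <= #|W :\: N a| * k) -> 2 * k * n <= #|W| ->
  exists A' B' : {set T}, [/\ A' \subset A, B' \subset W, #|B'| = n,
                    #|A| <= #|A'| * (2 * k) ^ n & anticomplete A' B'].
Proof.
move=> k_gt0 hA; elim: n => [|n IH] hW.
  exists A, set0; split; rewrite ?sub0set ?cards0 ?muln1 //.
  by move=> a b _; rewrite inE.
case: IH => [|A' [B' [sA sB cB cA anti]]]; first nia.
have [w /setDP[wW wB] hw] : exists2 w, w \in W :\: B' &
    #|A'| <= #|[set a in A' | ~~ adj a w]| * (2 * k).
  apply: averaging_nonnbr => [|a aA'].
    by rewrite cardsD (setIidPr sB) cB; nia.
  apply: far_shrink (subsetDl _ _) (hA a (subsetP sA a aA')) _.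
  by rewrite setDDr setDv set0U (setIidPr sB) cB; nia.
exists [set a in A' | ~~ adj a w], (w |: B'); split.
- by apply: subset_trans sA; apply/subsetP => a /setIdP[].
- by rewrite subUset sub1set wW.
- by rewrite cardsU1 wB cB.
- by rewrite expnS mulnA; apply: leq_trans cA _; rewrite leq_mul2r hw orbT.
- move=> a b /setIdP[aA' naw]; rewrite in_setU1 => /predU1P[-> //|]; exact: anti.
Qed.

Hypothesis adj_sym : symmetric adj.
Hypothesis adj_irr : irreflexive adj.
Variable c : T -> bool.
Hypothesis c_proper : forall u v, adj u v -> c u != c v.
Variable t : nat.
Hypothesis t_gt0 : 0 < t.

Lemma biclaw_of_anticomplete x y (A B : {set T}) : adj x y ->
  A \subset N x -> B \subset N y -> t <= #|A| -> t <= #|B| -> anticomplete A B ->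
  has_induced_biclaw adj t t.
Proof.
move=> xy sA sB hA hB anti.
pose fA (i : 'I_t) := enum_val (widen_ord hA i).
pose fB (i : 'I_t) := enum_val (widen_ord hB i).
have fA_inj : injective fA by move=> i j /enum_val_inj [] /val_inj.
have fB_inj : injective fB by move=> i j /enum_val_inj [] /val_inj.
have xA i : adj x (fA i) by have := subsetP sA _ (enum_valP (widen_ord hA i)); rewrite inE.
have yB i : adj y (fB i) by have := subsetP sB _ (enum_valP (widen_ord hB i)); rewrite inE.
have antiAB i j : adj (fA i) (fB j) = false.
  by apply/negbTE/anti; apply: enum_valP.
have col_nbr u v : adj u v -> c v = ~~ c u.
  by move/c_proper; case: (c u); case: (c v).
have col_nonadj u v : c u = c v -> adj u v = false.
  by move=> e; apply/negbTE/negP => /c_proper; rewrite e eqxx.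
have cy := col_nbr _ _ xy.
have cA i := col_nbr _ _ (xA i).
have cB i : c (fB i) = c x by rewrite (col_nbr _ _ (yB i)) cy negbK.
pose i0 : 'I_t := Ordinal t_gt0.
have x_fB i : (x == fB i) = false.
  by apply: contraFF (antiAB i0 i) => /eqP <-; rewrite adj_sym xA.
have y_fA i : (y == fA i) = false.
  by apply: contraFF (antiAB i i0) => /eqP <-; rewrite yB.
pose f (u : biclaw_vert t t) : T :=
  match u with inl true => x | inl false => y | inr (inl i) => fB i | inr (inr j) => fA j end.
have f_inj : injective f.
  move=> [[]|[i|i]] [[]|[j|j]] //= e; first
    [ by rewrite (fA_inj _ _ e) | by rewrite (fB_inj _ _ e)
    | by move: xy; rewrite e adj_irr
    | by move: (congr1 c e); rewrite ?cy ?cA ?cB; case: (c x)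
    | by move/eqP: e; rewrite ?x_fB ?y_fA 1?eq_sym ?x_fB ?y_fA ].
exists f; split=> // -[[]|[i|i]] [[]|[j|j]] /=;
  rewrite ?adj_irr ?xy ?xA ?yB ?antiAB 1?adj_sym ?xy ?xA ?yB ?antiAB //;
  by apply: col_nonadj; rewrite ?cy ?cA ?cB.
Qed.

Hypothesis no_biclaw : ~ has_induced_biclaw adj t t.

Lemma far_small k x y (W : {set T}) : 0 < k -> adj x y -> W \subset N y ->
  2 * k * t <= #|W| -> #|far k (N x) W| < t * (2 * k) ^ t.
Proof.
move=> k_gt0 xy sW hW; rewrite ltnNge; apply/negP => hF; apply: no_biclaw.
have [|A [B [sA sB cB cA anti]]] := anticomplete_grow (A := far k (N x) W) k_gt0 _ hW.
  by move=> a /setIdP[].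
apply: (biclaw_of_anticomplete xy (subset_trans sA (far_sub _ _ _)) (subset_trans sB sW) _ _ anti).
  have pow_gt0 : 0 < (2 * k) ^ t by rewrite expn_gt0 muln_gt0 k_gt0.
  by rewrite -(leq_pmul2r pow_gt0); apply: leq_trans hF cA.
by rewrite cB.
Qed.

Lemma far_small_of_close_nbr k x g (Y : {set T}) : 0 < k -> adj x g ->
  #|Y :\: N g| * (4 * k) < #|Y| -> 8 * k * t <= #|Y| -> #|far k (N x) Y| < t * (4 * k) ^ t.
Proof.
move=> k_gt0 xg hg hY.
have YW : Y :\: (Y :&: N g) = Y :\: N g by rewrite setDIr setDv set0U.
have cW : #|Y :&: N g| + #|Y :\: N g| = #|Y| := cardsID _ _.
have shrink : far k (N x) Y \subset far (2 * k) (N x) (Y :&: N g).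
  apply/subsetP => a /setIdP[aN ha]; rewrite inE aN /=.
  by apply: far_shrink (subsetIl _ _) ha _; rewrite YW; nia.
apply: leq_ltn_trans (subset_leq_card shrink) _.
rewrite -[4 * k]/(2 * 2 * k) -mulnA; apply: far_small (subsetIr _ _) _; rewrite ?muln_gt0 //; nia.
Qed.

Lemma far_small_of_half_nbr k m x q (Y : {set T}) : 0 < k ->
  #|N q :\: N x| * 2 < #|N q| -> #|far (4 * k) (N q) Y| <= m -> 2 * m <= #|N q| ->
  8 * k * t <= #|Y| -> #|far k (N x) Y| < t * (4 * k) ^ t.
Proof.
move=> k_gt0 hx hm hq hY.
have [g /setIP[gq gx] gclose] : exists2 g, g \in N q :&: N x & g \notin far (4 * k) (N q) Y.
  apply/exists_inP; rewrite -negb_forall_in; apply/negP => /forall_inP sub.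
  have : #|N q :&: N x| <= m.
    by apply: leq_trans hm; apply: subset_leq_card; apply/subsetP.
  by have := cardsID (N x) (N q); lia.
apply: (far_small_of_close_nbr (g := g) k_gt0 _ _ hY); first by rewrite inE in gx.
by move: gclose; rewrite inE gq /= -ltnNge.
Qed.

Lemma half_dense_card_le (A P B : {set T}) d :
  (forall a, a \in A -> #|P :\: N a| * 2 < #|P|) ->
  (forall x, x \in P :\: B -> #|N x :&: A| <= d) -> 4 * #|B| <= #|P| -> #|A| <= 4 * d.
Proof.
move=> hA hP hB.
have [->|/set0Pn[a0 a0A]] := eqVneq A set0; first by rewrite cards0.
have P_gt0 : 0 < #|P| by have := hA a0 a0A; lia.
have lower : #|A| * #|P| <= 2 * \sum_(a in A) #|[set x in P | adj a x]|.
  rewrite big_distrr -sum_nat_const /=; apply: leq_sum => a aA.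
  have -> : [set x in P | adj a x] = P :&: N a by apply/setP => x; rewrite !inE.
  by have := hA a aA; have := cardsID (N a) P; lia.
have upper : \sum_(x in P) #|[set a in A | adj a x]| <= #|P| * d + #|B| * #|A|.
  apply: leq_trans (_ : \sum_(x in P) (d + (x \in B) * #|A|) <= _).
    apply: leq_sum => x xP; case: (boolP (x \in B)) => xB.
      rewrite mul1n; apply: leq_trans (leq_addl _ _).
      by apply: subset_leq_card; apply/subsetP => a /setIdP[].
    have -> : [set a in A | adj a x] = N x :&: A.
      by apply/setP => a; rewrite !inE adj_sym andbC.
    by rewrite mul0n addn0; apply: hP; rewrite inE xB.
  rewrite big_split sum_nat_const -big_distrl /= -card_sep_sum leq_add2l leq_mul2r.
  by apply/orP; right; apply: subset_leq_card; apply/subsetP => x /setIdP[].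
rewrite double_count in lower.
nia.
Qed.

Lemma far_transfer k m q p q' (Y : {set T}) : 0 < k -> adj q p -> adj p q' ->
  #|far (4 * k) (N q') Y| <= m -> 8 * k * t <= #|Y| ->
  4 * t * 4 ^ t <= #|N p| -> 2 * m + 4 * t <= #|N q'| ->
  #|far k (N q) Y| <= 5 * t * (4 * k) ^ t.
Proof.
move=> k_gt0 qp pq' hm hY hp hq'.
have pow4_gt0 : 0 < 4 ^ t by rewrite expn_gt0.
have pow4_le : 4 ^ t <= (4 * k) ^ t by rewrite leq_exp2r //; lia.
have hG : #|far 2 (N q) (N p)| < t * 4 ^ t.
  by apply: (far_small _ qp (subxx _)) => //; nia.
have hB : #|far 2 (N p) (N q')| < t * 4 ^ t.
  by apply: (far_small _ pq' (subxx _)) => //; nia.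
have hF' : #|far k (N q) Y :\: far 2 (N q) (N p)| <= 4 * (t * (4 * k) ^ t).
  apply: (half_dense_card_le (P := N p) (B := far 2 (N p) (N q'))).
  - by move=> a /setDP[/setIdP[aq _]]; rewrite inE aq /= -ltnNge.
  - move=> x /setDP[xp]; rewrite inE xp /= -ltnNge => hx.
    apply: ltnW; apply: leq_ltn_trans (far_small_of_half_nbr k_gt0 hx hm _ hY); last lia.
    apply: subset_leq_card; apply/subsetP => a /setIP[ax /setDP[/setIdP[_ ha] _]].
    by rewrite inE ax.
  - nia.
have := cardsID (far 2 (N q) (N p)) (far k (N q) Y).
have := subset_leq_card (subsetIr (far k (N q) Y) (far 2 (N q) (N p))).
nia.
Qed.

End Far.

Definition far_factor (R : realType) (eps : R) : nat := (Num.truncn eps^-1).+1.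

Lemma Sset_sub_far (R : realType) (T : finType) (adj : rel T) (X Y : {set T}) (eps : R) :
  (0 < eps)%R -> Sset adj X Y eps \subset far adj (far_factor eps) X Y.
Proof.
move=> eps_gt0; apply/subsetP => v /setIdP[vX hv]; rewrite inE vX /=.
have hK : (1 < eps * (far_factor eps)%:R)%R.
  rewrite -[X in (X < _)%R](mulfV (lt0r_neq0 eps_gt0)) ltr_pM2l //.
  exact: truncnS_gt.
have cY : (#|Y|%:R = #|nbhd adj v :&: Y|%:R + #|Y :\: nbhd adj v|%:R :> R)%R.
  by rewrite -natrD setIC cardsID.
rewrite -(ler_nat R) natrM.
have := ler0n R #|Y|; have := ler0n R (far_factor eps).
nra.
Qed.

Definition degree_bound (t k : nat) : nat := 10 * t * (32 * k) ^ t + 32 * k * t.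

Theorem mainTheorem7 (R : realType) :
  exists C4 : nat -> R -> nat,
  forall (t : nat) (eps : R), (0 < t)%N -> (0 < eps)%R -> (eps < 1)%R ->
  forall (T : finType) (adj : rel T),
    symmetric adj -> irreflexive adj -> bipartite adj ->
    (forall v : T, (C4 t eps <= #|nbhd adj v|)%N) ->
    ~ has_induced_biclaw adj t t ->
    forall x1 x2 x3 x4 x5 x6 : T,
      uniq [:: x1; x2; x3; x4; x5; x6] ->
      adj x1 x2 -> adj x2 x3 -> adj x3 x4 -> adj x4 x5 -> adj x5 x6 ->
      (#|Sset adj (nbhd adj x1) (nbhd adj x6) eps| <= C4 t eps)%N.
Proof.
exists (fun t eps => degree_bound t (far_factor eps)).
move=> t eps t_gt0 eps_gt0 _ T adj sym irr [c c_proper] deg no_biclaw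
  x1 x2 x3 x4 x5 x6 _ a12 a23 a34 a45 a56.
set k := far_factor eps; set P := (32 * k) ^ t.
have k_gt0 : 0 < k by [].
have mindeg v : 10 * t * P + 32 * k * t <= #|nbhd adj v| := deg v.
have pow_le b : b <= 32 * k -> b ^ t <= P by move=> hb; rewrite leq_exp2r.
have p4 : 4 ^ t <= P by apply: pow_le; nia.
have p4k : (4 * k) ^ t <= P by apply: pow_le; nia.
have p16k : (4 * (4 * k)) ^ t <= P by apply: pow_le; nia.
have p32 : (2 * (4 * (4 * k))) ^ t = P by rewrite !mulnA.
have far5 : #|far adj (4 * (4 * k)) (nbhd adj x5) (nbhd adj x6)| <= t * P.
  rewrite -p32; apply/ltnW/(far_small sym irr c_proper t_gt0 no_biclaw _ a56 (subxx _)).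
    by rewrite !muln_gt0.
  by have := mindeg x6; nia.
have far3 : #|far adj (4 * k) (nbhd adj x3) (nbhd adj x6)| <= 5 * t * (4 * (4 * k)) ^ t.
  apply: (far_transfer sym irr c_proper t_gt0 no_biclaw _ a34 a45 far5).
  - by rewrite muln_gt0.
  - by have := mindeg x6; nia.
  - by have := mindeg x4; nia.
  - by have := mindeg x5; nia.
have far1 : #|far adj k (nbhd adj x1) (nbhd adj x6)| <= 5 * t * (4 * k) ^ t.
  apply: (far_transfer sym irr c_proper t_gt0 no_biclaw k_gt0 a12 a23 far3).
  - by have := mindeg x6; nia.
  - by have := mindeg x2; nia.
  - by have := mindeg x3; nia.
apply: leq_trans (subset_leq_card (Sset_sub_far _ _ _ eps_gt0)) _.
by apply: leq_trans far1 _; rewrite /degree_bound -/P; nia.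
Qed.
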